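(* Let $a,b,d>0$, let $c_-$ be the unique negative zero of $Q(x)=4ax^3-b^2x^2-18abd\,x+27a^2d^2+4db^3$, let $c^*=-\sqrt{3bd}$, and assume $c\in(c_-,c^* )$. Let $\phi(x)=\frac{ax^3+bx^2+cx+d}{x^3}$ ($x>0$), $x_m=\frac{-c-\sqrt{c^2-3bd}}{b}$, $x_M=\frac{-c+\sqrt{c^2-3bd}}{b}$, and $c_1^*=-2\sqrt{bd}$. \begin{description} \item[(a)] $c_-<c_1^*$. \item[(b)] $\phi(x_m)>a$ if and only if $c>c_1^*$. \item[(c)] Suppose $c>c_1^*$. Then there exists a unique number $\eta>x_M$ such that $\phi(\eta)=\phi(x_m)$, and $$\eta=\frac{-dx_m}{cx_m+2d}.$$ \end{description}
   Context: $x_m<x_M$ are the local minimum and local maximum points of $\phi$ on $(0,\infty)$. *)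

From Stdlib Require Import Reals.
Open Scope R_scope.

Definition Qpoly (a b d x : R) : R :=
  4 * a * x ^ 3 - b ^ 2 * x ^ 2 - 18 * a * b * d * x
  + 27 * a ^ 2 * d ^ 2 + 4 * d * b ^ 3.

Definition phi (a b c d x : R) : R :=
  (a * x ^ 3 + b * x ^ 2 + c * x + d) / x ^ 3.

Definition x_m (b c d : R) : R := (- c - sqrt (c ^ 2 - 3 * b * d)) / b.
Definition x_M (b c d : R) : R := (- c + sqrt (c ^ 2 - 3 * b * d)) / b.

From Stdlib Require Import Reals Lra Psatz.
Open Scope R_scope.

(** Since [phi'(x) = -(b x^2 + 2 c x + 3 d) / x^4], the critical points [x_m < x_M]
    are the roots of [b x^2 + 2 c x + 3 d].  At such a root [x], the difference
    [phi y - phi x] factors as [-(y - x)^2 (E y - d x) / (x^3 y^3)] with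
    [E = b x^2 + c x + d = x^3 (phi x - a)], so the level set of [phi x] consists of
    [x] and the single point [d x / E].  Everything thus reduces to the sign of
    [E] at [x_m], which is positive exactly when [c > -2 sqrt (b d)], and to the
    inequality [x_M E < d x_m].  For (a),
    [Q(-2 sqrt (b d)) = 4 a b d sqrt (b d) + 27 a^2 d^2 > 0] while the cubic [Q] is
    negative far to the left, so [Q] has a root below [-2 sqrt (b d)], which must
    be [c_-]. *)

Lemma phi_gt_leading_iff a b c d x :
  0 < x -> a < phi a b c d x <-> 0 < b * x ^ 2 + c * x + d.
Proof.
  intros hx.
  assert (hx3 : 0 < x ^ 3) by (apply pow_lt; lra).
  assert (hsub : phi a b c d x - a = (b * x ^ 2 + c * x + d) / x ^ 3)
    by (unfold phi; field; lra).
  split; intro h.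
  - replace (b * x ^ 2 + c * x + d) with ((b * x ^ 2 + c * x + d) / x ^ 3 * x ^ 3)
      by (field; lra).
    apply Rmult_lt_0_compat; lra.
  - assert (0 < (b * x ^ 2 + c * x + d) / x ^ 3) by (apply Rdiv_lt_0_compat; lra).
    lra.
Qed.

Lemma phi_sub_at_critical a b c d x y :
  0 < x -> 0 < y -> b * x ^ 2 + 2 * c * x + 3 * d = 0 ->
  (phi a b c d y - phi a b c d x) * (x ^ 3 * y ^ 3)
  = - (y - x) ^ 2 * ((b * x ^ 2 + c * x + d) * y - d * x).
Proof.
  intros hx hy hcrit.
  replace d with (- (b * x ^ 2 + 2 * c * x) / 3) by lra.
  unfold phi; field; lra.
Qed.

Lemma phi_eq_at_critical a b c d x y :
  0 < x -> 0 < y -> y <> x -> b * x ^ 2 + 2 * c * x + 3 * d = 0 ->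
  phi a b c d y = phi a b c d x <-> (b * x ^ 2 + c * x + d) * y = d * x.
Proof.
  intros hx hy hyx hcrit.
  pose proof (phi_sub_at_critical a b c d x y hx hy hcrit) as hdiff.
  assert (hpow : 0 < x ^ 3 * y ^ 3) by (apply Rmult_lt_0_compat; apply pow_lt; lra).
  assert (hsq : 0 < (y - x) ^ 2) by (rewrite <- Rsqr_pow2; apply Rsqr_pos_lt; lra).
  split; intro h.
  - rewrite h, Rminus_diag, Rmult_0_l in hdiff. nra.
  - replace ((b * x ^ 2 + c * x + d) * y - d * x) with 0 in hdiff by lra.
    apply Rminus_diag_uniq, (Rmult_eq_reg_r (x ^ 3 * y ^ 3)); lra.
Qed.

Section Discriminant_cubic.

Variables a b d : R.
Hypotheses (ha : 0 < a) (hb : 0 < b) (hd : 0 < d).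

Lemma Qpoly_minus_two_sqrt_pos : 0 < Qpoly a b d (- 2 * sqrt (b * d)).
Proof.
  set (s := sqrt (b * d)).
  assert (hs : 0 < s) by (apply sqrt_lt_R0; nra).
  assert (hs2 : s * s = b * d) by (apply sqrt_sqrt; nra).
  replace (Qpoly a b d (- 2 * s)) with (4 * a * b * d * s + 27 * a ^ 2 * d ^ 2).
  - assert (0 < a * b * d * s) by (repeat apply Rmult_lt_0_compat; lra). nra.
  - unfold Qpoly. replace ((-2 * s) ^ 3) with (- 8 * (s * s) * s) by ring.
    replace ((-2 * s) ^ 2) with (4 * (s * s)) by ring.
    rewrite hs2. ring.
Qed.

Lemma Qpoly_neg_far_left w : w <= 0 -> exists z, z < w /\ Qpoly a b d z < 0.
Proof.
  intros hw.
  set (C := 27 * a ^ 2 * d ^ 2 + 4 * d * b ^ 3).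
  assert (hC : 0 < C).
  { assert (0 < a ^ 2 * d ^ 2) by (apply Rmult_lt_0_compat; apply pow_lt; lra).
    assert (0 < d * b ^ 3) by (apply Rmult_lt_0_compat; [|apply pow_lt]; lra).
    unfold C; lra. }
  (* Once [K > 1] and [4 a K > 18 a b d + C], the leading term [-4 a K^3] dominates. *)
  set (K := 1 - w + (18 * a * b * d + C) / (4 * a)).
  assert (habd : 0 < a * b * d) by (repeat apply Rmult_lt_0_compat; lra).
  assert (hquot : 0 < (18 * a * b * d + C) / (4 * a))
    by (apply Rdiv_lt_0_compat; lra).
  assert (hK1 : 1 < K) by (unfold K; lra).
  assert (h4aK : 18 * a * b * d + C < 4 * a * K).
  { assert (4 * a * ((18 * a * b * d + C) / (4 * a)) = 18 * a * b * d + C)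
      by (field; lra).
    unfold K; nra. }
  exists (- K); split; [unfold K; lra|].
  assert (hKK : K < K ^ 2) by nra.
  assert (hcube : (18 * a * b * d + C) * K ^ 2 < 4 * a * K ^ 3).
  { replace (4 * a * K ^ 3) with (4 * a * K * K ^ 2) by ring.
    apply Rmult_lt_compat_r; lra. }
  assert (hsquare : 18 * a * b * d * K + C <= (18 * a * b * d + C) * K ^ 2).
  { assert (0 <= a * b * d * (K ^ 2 - K)) by (apply Rmult_le_pos; lra).
    assert (0 <= C * (K ^ 2 - 1)) by (apply Rmult_le_pos; lra).
    lra. }
  assert (0 <= b ^ 2 * K ^ 2) by (apply Rmult_le_pos; apply pow2_ge_0).
  unfold Qpoly.
  replace ((- K) ^ 3) with (- K ^ 3) by ring.
  replace ((- K) ^ 2) with (K ^ 2) by ring.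
  unfold C in hcube, hsquare. lra.
Qed.

Lemma Qpoly_root_below w :
  w <= 0 -> 0 < Qpoly a b d w -> exists z, z < w /\ Qpoly a b d z = 0.
Proof.
  intros hw hpos.
  destruct (Qpoly_neg_far_left w hw) as [z0 [hz0 hneg]].
  assert (hcont : continuity (Qpoly a b d)) by (intro; unfold Qpoly; reg).
  destruct (IVT (Qpoly a b d) z0 w hcont hz0 hneg hpos) as [z [[hz1 hz2] hroot]].
  exists z; split; [|exact hroot].
  destruct hz2 as [|<-]; [assumption|lra].
Qed.

End Discriminant_cubic.

Section Critical_points.

Variables b c d : R.
Hypotheses (hb : 0 < b) (hd : 0 < d) (hc : c < - sqrt (3 * b * d)).

Lemma disc_pos : 0 < c ^ 2 - 3 * b * d.
Proof.
  assert (hq : 0 < sqrt (3 * b * d)) by (apply sqrt_lt_R0; nra).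
  assert (hq2 : sqrt (3 * b * d) * sqrt (3 * b * d) = 3 * b * d)
    by (apply sqrt_sqrt; nra).
  nra.
Qed.

Lemma sqrt_disc_sq :
  sqrt (c ^ 2 - 3 * b * d) * sqrt (c ^ 2 - 3 * b * d) = c ^ 2 - 3 * b * d.
Proof. apply sqrt_sqrt; pose proof disc_pos; lra. Qed.

Lemma sqrt_disc_bounds : 0 < sqrt (c ^ 2 - 3 * b * d) < - c.
Proof.
  pose proof disc_pos as hdisc.
  assert (c < 0) by (pose proof (sqrt_pos (3 * b * d)); lra).
  split; [now apply sqrt_lt_R0|].
  rewrite <- (sqrt_pow2 (- c)) by lra.
  apply sqrt_lt_1_alt; split; nra.
Qed.

Lemma x_m_pos : 0 < x_m b c d.
Proof.
  pose proof sqrt_disc_bounds.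
  unfold x_m; apply Rdiv_lt_0_compat; lra.
Qed.

Lemma x_m_lt_x_M : x_m b c d < x_M b c d.
Proof.
  pose proof sqrt_disc_bounds.
  unfold x_m, x_M, Rdiv.
  apply Rmult_lt_compat_r; [apply Rinv_0_lt_compat|]; lra.
Qed.

Lemma x_m_critical : b * x_m b c d ^ 2 + 2 * c * x_m b c d + 3 * d = 0.
Proof.
  pose proof disc_pos.
  unfold x_m; field_simplify; [|lra].
  rewrite pow2_sqrt by lra. unfold Rdiv; ring.
Qed.

Lemma x_m_excess_mul_b :
  (b * x_m b c d ^ 2 + c * x_m b c d + d) * b
  = sqrt (c ^ 2 - 3 * b * d) * c + c ^ 2 - 2 * b * d.
Proof.
  pose proof disc_pos.
  unfold x_m; field_simplify; [|lra].
  rewrite pow2_sqrt by lra. field; lra.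
Qed.

Lemma x_m_excess_pos_iff :
  0 < b * x_m b c d ^ 2 + c * x_m b c d + d <-> - 2 * sqrt (b * d) < c.
Proof.
  pose proof x_m_excess_mul_b as hE.
  pose proof sqrt_disc_bounds as [hr hrc].
  pose proof sqrt_disc_sq as hr2.
  set (r := sqrt (c ^ 2 - 3 * b * d)) in *.
  set (E := b * x_m b c d ^ 2 + c * x_m b c d + d) in *.
  assert (hs : 0 < sqrt (b * d)) by (apply sqrt_lt_R0; nra).
  assert (hs2 : sqrt (b * d) * sqrt (b * d) = b * d) by (apply sqrt_sqrt; nra).
  (* With [r c < 0], both directions pass through [c^2 < 4 b d], because
     [(c^2 - 2 b d)^2 - (r c)^2 = b d (4 b d - c^2)]. *)
  split; intro h.
  - assert (h1 : r * c + c ^ 2 - 2 * b * d > 0) by nra.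
    assert (h2 : c ^ 2 < 4 * b * d) by nra.
    nra.
  - assert (h2 : c ^ 2 < 4 * b * d) by nra.
    assert (h3 : (c ^ 2 - 2 * b * d) ^ 2 > (r * c) ^ 2) by nra.
    assert (h4 : c ^ 2 - 2 * b * d > - (r * c)) by nra.
    nra.
Qed.

Lemma x_M_mul_excess_lt :
  x_M b c d * (b * x_m b c d ^ 2 + c * x_m b c d + d) < d * x_m b c d.
Proof.
  pose proof x_m_excess_mul_b as hE.
  pose proof sqrt_disc_bounds as [hr hrc].
  pose proof sqrt_disc_sq as hr2.
  assert (hxm : x_m b c d * b = - c - sqrt (c ^ 2 - 3 * b * d))
    by (unfold x_m; field; lra).
  assert (hxM : x_M b c d * b = - c + sqrt (c ^ 2 - 3 * b * d))
    by (unfold x_M; field; lra).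
  set (r := sqrt (c ^ 2 - 3 * b * d)) in *.
  set (E := b * x_m b c d ^ 2 + c * x_m b c d + d) in *.
  assert (hgap : (d * x_m b c d - x_M b c d * E) * (b * b) = b * d * r).
  { replace ((d * x_m b c d - x_M b c d * E) * (b * b))
      with (d * b * (x_m b c d * b) - x_M b c d * b * (E * b)) by ring.
    rewrite hxm, hxM, hE. nra. }
  assert (0 < b * d * r) by (repeat apply Rmult_lt_0_compat; lra).
  assert (0 < b * b) by nra.
  nra.
Qed.

End Critical_points.

Theorem lemma3 (a b c d c_minus : R)
  (ha : 0 < a) (hb : 0 < b) (hd : 0 < d)
  (hcm_neg : c_minus < 0)
  (hcm_zero : Qpoly a b d c_minus = 0)
  (hcm_unique : forall x, x < 0 -> Qpoly a b d x = 0 -> x = c_minus)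
  (hc_low : c_minus < c)
  (hc_up : c < - sqrt (3 * b * d)) :
  c_minus < - 2 * sqrt (b * d) /\
  (phi a b c d (x_m b c d) > a <-> c > - 2 * sqrt (b * d)) /\
  (c > - 2 * sqrt (b * d) ->
     exists eta,
       (x_M b c d < eta /\ phi a b c d eta = phi a b c d (x_m b c d)) /\
       (forall y, x_M b c d < y -> phi a b c d y = phi a b c d (x_m b c d) -> y = eta) /\
       eta = - d * x_m b c d / (c * x_m b c d + 2 * d)).
Proof.
  pose proof (sqrt_pos (b * d)) as hs.
  pose proof (x_m_pos b c d hb hd hc_up) as hxm.
  pose proof (x_m_lt_x_M b c d hb hd hc_up) as hxmM.
  pose proof (x_m_critical b c d hb hd hc_up) as hcrit.
  pose proof (x_m_excess_pos_iff b c d hb hd hc_up) as hsign.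
  pose proof (x_M_mul_excess_lt b c d hb hd hc_up) as hgap.
  set (xm := x_m b c d) in *; set (xM := x_M b c d) in *.
  set (E := b * xm ^ 2 + c * xm + d) in *.
  split; [|split].
  - destruct (Qpoly_root_below a b d ha hb hd (- 2 * sqrt (b * d))) as [z [hz hroot]].
    + lra.
    + now apply Qpoly_minus_two_sqrt_pos.
    + assert (z = c_minus) by (apply hcm_unique; [lra | exact hroot]). lra.
  - rewrite <- hsign. now apply phi_gt_leading_iff.
  - intros hc. apply hsign in hc as hE.
    assert (hEeta : E * (d * xm / E) = d * xm) by (field; lra).
    assert (heta : xM < d * xm / E).
    { apply (Rmult_lt_reg_l E); [lra|]. rewrite hEeta. lra. }
    exists (d * xm / E); split; [split|split].
    + exact heta.
    + apply phi_eq_at_critical; [lra.. | exact hEeta].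
    + intros y hy hphi.
      apply phi_eq_at_critical in hphi; [fold E in hphi | lra ..].
      apply (Rmult_eq_reg_l E); lra.
    + replace E with (- (c * xm + 2 * d)) by (unfold E; lra).
      field. unfold E in hE. lra.
Qed.
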